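(* Let $m\ge3$ and let $\{X_n\}$ be a sequence of finite connected $2$-connected graphs such that for each $n$ the number $N_n$ of maximal spanning trees of $X_n$ not containing a given edge is independent of the edge, and $\mathrm{girth}(X_n)\to\infty$. Let $\widetilde{X}_n$ be the $\mathbb{Z}_m$-homology cover of $X_n$. Let $d$ be the coarse disjoint union metric on $\bigsqcup_n\widetilde{X}_n$ restricting to the graph metric on each $\widetilde{X}_n$, and $d_Q$ the coarse disjoint union metric restricting to $d_{Q_n}$ on each $\widetilde{X}_n$. Then the identity map $(\bigsqcup_n\widetilde{X}_n,d)\to(\bigsqcup_n\widetilde{X}_n,d_Q)$ is a coarse equivalence, i.e. it and its inverse are coarse embeddings.
   Context: A graph is $2$-connected if removing any single edge leaves it connected; girth is the length of a shortest cycle. $\mathbb{Z}_m$-homology cover of a finite connected graph $X$: fix orientations of the edges; for a maximal spanning tree $T$ with complementary edges $e_1,\dots,e_r$ (a free basis of $\pi_1(X)$), let $\rho:\pi_1(X)\to K=\pi_1(X)/[\pi_1(X),\pi_1(X)]\pi_1(X)^m\cong\oplus^r\mathbb{Z}_m$; $\widetilde{X}$ has vertices $V(X)\times K$, edges $E(X)\times K$, where for $e$ from $v$ to $w$ the edge $(e,k)$ joins $(v,k)$ to $(w,k)$ if $e\in T$ and to $(w,\rho(e)k)$ if $e\notin T$. For a maximal tree $T$, clouds are the sets $V(X)\times\{k\}$; $C^T_x$ is the cloud containing $x$, identified with an element of $\oplus^r\mathbb{Z}_m$; $d_T$ is the word metric on $\oplus^r\mathbb{Z}_m$ with respect to $\rho(e_1),\dots,\rho(e_r)$.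 On $\widetilde{X}_n$, $d_{Q_n}(x,y)=\frac{1}{N_n}\sum_T d_T(C^T_x,C^T_y)$, summing over all maximal spanning trees $T$ of $X_n$. A coarse disjoint union metric restricts to the given metric on each component, with distances between distinct components larger than their diameters and tending to infinity. A coarse embedding is a map with non-decreasing $\rho_\pm\to\infty$ and $\rho_-(d(x,x'))\le d'(F(x),F(x'))\le\rho_+(d(x,x'))$. *)

From HB Require Import structures.
From mathcomp Require Import all_boot all_order all_algebra.
Set Implicit Arguments. Unset Strict Implicit. Unset Printing Implicit Defensive.
Import Order.TTheory GRing.Theory Num.Theory.

(* (Loops and multiple edges are allowed; the orientation is the fixed       *)
(* orientation used in the construction of homology covers.)                 *)
Section Graphs.
Variables (V E : finType) (src tgt : E -> V).

Definition adjS (S : {set E}) : rel V :=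
  fun u w => [exists e in S, ((src e == u) && (tgt e == w))
                          || ((src e == w) && (tgt e == u))].

Definition connected_graph : Prop := forall u w, connect (adjS [set: E]) u w.

(* "2-connected": removing any single edge leaves the graph connected *)
Definition two_connected : Prop :=
  forall e0 : E, forall u w, connect (adjS [set~ e0]) u w.

(* darts: an edge traversed forwards (true) or backwards (false) *)
Definition dtail (d : E * bool) : V := if d.2 then src d.1 else tgt d.1.
Definition dhead (d : E * bool) : V := if d.2 then tgt d.1 else src d.1.

Definition is_cycle (ds : seq (E * bool)) : bool :=
  [&& ds != [::], cycle (fun d1 d2 => dhead d1 == dtail d2) ds,
      uniq (map fst ds) & uniq (map dtail ds)].

Definition girth_ge (L : nat) : Prop :=
  forall ds, is_cycle ds -> (L <= size ds)%N.

(* boolean form: cycles have pairwise distinct edges, hence length <= #|E|,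
   so quantifying over walks of length <= #|E| covers all cycles *)
Definition spanning_treeb (T : {set E}) : bool :=
  [forall u, forall w, connect (adjS T) u w] &&
  [forall n : 'I_(#|E|.+1), forall ds : n.-tuple (E * bool),
     ~~ (is_cycle ds && all (fun d => d.1 \in T) ds)].

(* The Z_m-homology cover, in its intrinsic (chain) model: fix a base vertex *)
(* v0; vertices are pairs (v, c) with c a Z_m-valued 1-chain whose boundary  *)
(* is v - v0 (c is the homology class of a path from v0 to v); the edge      *)
(* (e, c) joins (src e, c) to (tgt e, c + e).  For a maximal tree T with     *)
(* complementary edges e_1..e_r this is isomorphic (over X) to the graph     *)
(* with vertices V x (Z_m)^r of the paper, via (v,k) |-> [T-path v0->v] +    *)
(* sum_i k_i z_i (z_i the fundamental cycle of e_i), and under it the cloud  *)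
(* C^T_x of x = (v, c) is the vector (c(e_1), ..., c(e_r)).                  *)
Variable m : nat.

Local Notation chain := {ffun E -> 'Z_m}.

Definition bnd (c : chain) : {ffun V -> 'Z_m} :=
  [ffun u => (\sum_(e | tgt e == u) c e - \sum_(e | src e == u) c e)%R].

Definition vdelta (v : V) : {ffun V -> 'Z_m} := [ffun u => ((u == v)%:R)%R].

Definition edelta (e : E) : chain := [ffun f => ((f == e)%:R)%R].

Definition cover_pred (v0 : V) (p : V * chain) : bool :=
  bnd p.2 == (vdelta p.1 - vdelta v0)%R.

Definition cover_vtx (v0 : V) : Type := {p : V * chain | cover_pred v0 p}.

Definition cover_adj (v0 : V) : rel (cover_vtx v0) :=
  fun x y => [exists e : E,
     ((val x).1 == src e) && ((val y).1 == tgt e) && ((val y).2 == (val x).2 + edelta e)%R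
  || ((val y).1 == src e) && ((val x).1 == tgt e) && ((val x).2 == (val y).2 + edelta e)%R].

(* cloud of x w.r.t. T: the coordinates of x on the edges not in T,
   i.e. an element of the subgroup (+)_{e \notin T} Z_m edelta e *)
Definition cloud (T : {set E}) (c : chain) : chain :=
  [ffun e => if e \in T then 0%R else c e].

End Graphs.

(* graph metric of a finite graph given by its adjacency relation:
   the least length of a walk from x to y (walks of length < #|T| suffice) *)
Definition walk_len (T : finType) (adj : rel T) (x y : T) (k : nat) : bool :=
  [exists p : k.-tuple T, path adj x p && (last x p == y)].

Definition gdist (T : finType) (adj : rel T) (x y : T) : nat :=
  find (walk_len adj x y) (iota 0 #|T|).

(* word metric on the group {ffun E -> Z_m} (restricted to the subgroup
   (+)_{e \in Is} Z_m edelta e ~ (+)^r Z_m) w.r.t. the generators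
   {edelta e | e \in Is} and their inverses: the least length of a word in
   the edelta e^{+-1} (e \in Is) equal to -a + b.  (Words of length
   < #|{ffun E -> Z_m}| suffice.) *)
Definition word_len (E : finType) (m : nat) (Is : {set E})
    (a b : {ffun E -> 'Z_m}) (k : nat) : bool :=
  [exists w : k.-tuple (E * bool),
     all (fun p => p.1 \in Is) w &&
     ((\sum_(p <- w) (if p.2 then edelta m p.1 else - edelta m p.1))%R == (b - a)%R)].

Definition word_dist (E : finType) (m : nat) (Is : {set E})
    (a b : {ffun E -> 'Z_m}) : nat :=
  find (word_len Is a b) (iota 0 #|{ffun E -> 'Z_m}|).

Definition dQn (R : realFieldType) (V E : finType) (src tgt : E -> V) (m : nat)
    (v0 : V) (N : nat) (x y : cover_vtx src tgt m v0) : R :=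
  (N%:R^-1 * \sum_(T : {set E} | spanning_treeb src tgt T)
     (word_dist (~: T) (cloud T (val x).2) (cloud T (val y).2))%:R)%R.

Local Open Scope ring_scope.

Definition is_metric (R : realFieldType) (X : Type) (d : X -> X -> R) : Prop :=
  (forall x, d x x = 0) /\ (forall x y, x <> y -> 0 < d x y) /\
  (forall x y, d x y = d y x) /\ (forall x y z, d x z <= d x y + d y z).

Definition coarse_disjoint_union (R : realFieldType) (T : nat -> Type)
    (dn : forall n, T n -> T n -> R) (d : {n : nat & T n} -> {n : nat & T n} -> R) : Prop :=
  is_metric d /\
  (forall n (a b : T n), d (existT _ n a) (existT _ n b) = dn n a b) /\
  (forall n k, n <> k -> forall (a : T n) (b : T k),
      (forall a1 a2 : T n, dn n a1 a2 < d (existT _ n a) (existT _ k b)) /\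
      (forall b1 b2 : T k, dn k b1 b2 < d (existT _ n a) (existT _ k b))) /\
  (forall M : R, exists N0 : nat, forall n k, n <> k -> (N0 <= maxn n k)%N ->
      forall (a : T n) (b : T k), M <= d (existT _ n a) (existT _ k b)).

Definition nondecreasing_fun (R : realFieldType) (f : R -> R) : Prop :=
  forall s t, s <= t -> f s <= f t.

Definition tends_to_infty (R : realFieldType) (f : R -> R) : Prop :=
  forall M, exists t0, forall t, t0 <= t -> M <= f t.

Definition coarse_embedding (R : realFieldType) (X Y : Type)
    (dX : X -> X -> R) (dY : Y -> Y -> R) (F : X -> Y) : Prop :=
  exists rm rp : R -> R,
    nondecreasing_fun rm /\ nondecreasing_fun rp /\
    tends_to_infty rm /\ tends_to_infty rp /\
    forall x x', rm (dX x x') <= dY (F x) (F x') /\ dY (F x) (F x') <= rp (dX x x').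

(* For two vertices x, y of one component let z be the difference of their
   chains; both metrics on the component are controlled by |supp z|.
   - An edge of the cover changes the chain on a single edge e of X, which changes d_T by at
     most one and only for the N trees avoiding e; so d_Q is bounded by the graph metric d.
   - A word of length k in the generators changes at most k coordinates, so
     d_T(C^T_x, C^T_y) >= |supp z \ T|; averaging over the trees, each edge being avoided by
     exactly N of them, gives d_Q >= |supp z|.
   - If every edge of supp z is a bridge of supp z (e.g. when all cycles of X are longer than
     |supp z|), a cut argument produces an edge at the current vertex along which z is +-1, and
     stepping along it shrinks the support; so d <= |supp z|.  A non-bridge e lies on a cycle,
     and travelling around it z(e) times removes e from the support; hence the cover is
     connected.
   As the girth tends to infinity, d_Q <= L forces d <= L on all but finitely many components.
   Distances between components diverge in both metrics, so only finitely many components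
   matter at any given scale, and the control functions are assembled from these bounds. *)

From HB Require Import structures.
From mathcomp Require Import all_boot all_order all_algebra.
From mathcomp Require Import ring.
From Stdlib Require Import Classical ClassicalEpsilon.
Set Implicit Arguments. Unset Strict Implicit. Unset Printing Implicit Defensive.
Import Order.TTheory GRing.Theory Num.Theory.
Local Open Scope ring_scope.

Lemma sum_natr_eq (R : pzSemiRingType) (T : finType) (P : pred T) (a : T) :
  \sum_(x | P x) ((x == a)%:R : R) = (P a)%:R.
Proof.
rewrite big_mkcond (bigD1 a) //= big1 => [|x xa]; last by rewrite (negbTE xa); case: (P x).
by rewrite eqxx addr0; case: (P a).
Qed.

Section Chains.
Variables (V E : finType) (src tgt : E -> V) (m : nat).
Local Notation chain := {ffun E -> 'Z_m}.
Local Notation bnd := (@bnd V E src tgt m).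
Local Notation edelta := (edelta m).
Local Notation vdelta := (vdelta m).
Local Notation dtail := (dtail src tgt).
Local Notation dhead := (dhead src tgt).

Lemma bnd_is_zmod_morphism : zmod_morphism bnd.
Proof.
move=> c1 c2; apply/ffunP=> u; rewrite !ffunE.
under eq_bigr do rewrite !ffunE; under [X in _ - X]eq_bigr do rewrite !ffunE.
by rewrite !sumrB; ring.
Qed.

HB.instance Definition _ := GRing.isZmodMorphism.Build _ _ bnd bnd_is_zmod_morphism.

Lemma sum_edelta (P : pred E) e : \sum_(f | P f) edelta e f = (P e)%:R.
Proof. under eq_bigr do rewrite ffunE. exact: sum_natr_eq. Qed.

Lemma bnd_edelta e : bnd (edelta e) = vdelta (tgt e) - vdelta (src e).
Proof. by apply/ffunP=> u; rewrite !ffunE !sum_edelta /= (eq_sym u) (eq_sym u). Qed.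

Definition supp (z : chain) : {set E} := [set e | z e != 0].

Lemma supp_eq0 (z : chain) : (supp z == set0) = (z == 0).
Proof.
apply/eqP/eqP => [z0|->]; last by apply/setP => e; rewrite !inE ffunE eqxx.
apply/ffunP => e; rewrite ffunE; apply/eqP; apply: contraFT (in_set0 e) => ze.
by rewrite -z0 inE.
Qed.

Definition dart_chain (d : E * bool) : chain := if d.2 then edelta d.1 else - edelta d.1.

Lemma dart_chain_off d e : d.1 != e -> dart_chain d e = 0.
Proof. by case: d => f [] /= fe; rewrite ?ffunE eq_sym (negbTE fe) ?oppr0. Qed.

Lemma dart_chain_neq0 d : dart_chain d d.1 != 0.
Proof. by case: d => e [] /=; rewrite ?ffunE eqxx ?oppr_eq0 oner_eq0. Qed.

Lemma supp_subr_dart_chain (z : chain) d : z d.1 = dart_chain d d.1 ->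
  supp (z - dart_chain d) = supp z :\ d.1.
Proof.
move=> zd; apply/setP => e; rewrite !inE !ffunE.
case: (eqVneq e d.1) => [->|ed]; first by rewrite zd subrr eqxx.
by rewrite dart_chain_off ?subr0 // eq_sym.
Qed.

Lemma bnd_dart_chain d : bnd (dart_chain d) = vdelta (dhead d) - vdelta (dtail d).
Proof. by case: d => e [] /=; rewrite ?raddfN /= bnd_edelta ?opprB. Qed.

Fixpoint walk (x : V) (ds : seq (E * bool)) : bool :=
  if ds is d :: ds' then (dtail d == x) && walk (dhead d) ds' else true.

Definition walk_end x ds := last x (map dhead ds).

Definition walk_chain (ds : seq (E * bool)) : chain := \sum_(d <- ds) dart_chain d.

Lemma walk_chain_cons d ds : walk_chain (d :: ds) = dart_chain d + walk_chain ds.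
Proof. exact: big_cons. Qed.

Lemma walk_chain_off ds e : all (fun d => d.1 != e) ds -> walk_chain ds e = 0.
Proof.
rewrite /walk_chain sum_ffunE => /allP ds_e.
by rewrite big_seq big1 // => d /ds_e; exact: dart_chain_off.
Qed.

Lemma bnd_walk_chain x ds :
  walk x ds -> bnd (walk_chain ds) = vdelta (walk_end x ds) - vdelta x.
Proof.
elim: ds x => [|d ds IH] x /=; first by rewrite /walk_chain big_nil raddf0 subrr.
case/andP=> /eqP <- w_ds; rewrite walk_chain_cons raddfD /= (IH _ w_ds) bnd_dart_chain.
by rewrite addrC addrA subrK.
Qed.

Lemma walk_of_path S x p : path (adjS src tgt S) x p ->
  exists ds, [/\ walk x ds, map dhead ds = p & all (fun d => d.1 \in S) ds].
Proof.
elim: p x => [|y p IH] x /=; first by exists [::].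
case/andP=> /existsP [e /andP [eS e_xy]] /IH [ds [w_ds <- ds_S]].
case/orP: e_xy => /andP [/eqP x_e /eqP y_e];
  [exists ((e, true) :: ds) | exists ((e, false) :: ds)];
  by rewrite /= /dtail /dhead /= x_e y_e eqxx eS w_ds ds_S.
Qed.

Lemma walk_of_connect S x y : connect (adjS src tgt S) x y ->
  exists ds, [/\ walk x ds, walk_end x ds = y & all (fun d => d.1 \in S) ds].
Proof.
by case/connectP => p /walk_of_path [ds [w_ds ds_p ds_S]] ->; exists ds; rewrite /walk_end ds_p.
Qed.

Lemma walk_tails x ds : walk x ds -> map dtail ds = belast x (map dhead ds).
Proof. by elim: ds x => [|d ds IH] x //= /andP [/eqP <- /IH ->]. Qed.

Lemma dart_ends d v : (v == src d.1) || (v == tgt d.1) = (v == dtail d) || (v == dhead d).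
Proof. by case: d => e [] //=; rewrite orbC. Qed.

Lemma walk_uniq_edges x ds : walk x ds -> uniq (x :: map dhead ds) -> uniq (map fst ds).
Proof.
elim: ds x => [|d ds IH] x //= /andP [/eqP d_x w_ds] /andP [x_ds u_ds].
rewrite (IH _ w_ds u_ds) andbT; apply/mapP => [[d' d'_ds e_dd']].
have dh' : dhead d' \in map dhead ds by exact: map_f.
have dt' : dtail d' \in dhead d :: map dhead ds.
  by apply: mem_belast; rewrite -(walk_tails w_ds) map_f.
have : (x == src d.1) || (x == tgt d.1) by rewrite dart_ends d_x eqxx.
rewrite e_dd' dart_ends => /orP [] /eqP x_d'; move: x_ds; rewrite x_d' ?dt' //.
by rewrite inE dh' orbT.
Qed.

Lemma walk_cycle_path d0 d ds : walk (dhead d) ds -> walk_end (dhead d) ds = dtail d0 ->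
  path (fun d1 d2 => dhead d1 == dtail d2) d (rcons ds d0).
Proof.
elim: ds d => [|d' ds IH] d /=; first by rewrite /walk_end /= => _ ->; rewrite eqxx.
by case/andP => /eqP -> w_ds e_ds; rewrite eqxx /=; exact: IH.
Qed.

Lemma size_le_card_edges (S : {set E}) (ds : seq (E * bool)) :
  uniq (map fst ds) -> all (fun d => d.1 \in S) ds -> (size ds <= #|S|)%N.
Proof.
move=> u_ds /allP ds_S; rewrite -(size_map fst) cardE.
by apply: uniq_leq_size => // _ /mapP [d /ds_S d_S ->]; rewrite mem_enum.
Qed.

Lemma cycle_of_nonbridge (S : {set E}) e : e \in S ->
  connect (adjS src tgt (S :\ e)) (tgt e) (src e) ->
  exists ds, [/\ walk (tgt e) ds, walk_end (tgt e) ds = src e,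
    all (fun d => d.1 \in S :\ e) ds & is_cycle src tgt ((e, true) :: ds)].
Proof.
move=> eS /connectP [p p_path p_last].
move: p_last; case: (shortenP p_path) => p' p'_path p'_uniq _ p'_last.
case: (walk_of_path p'_path) => ds [w_ds ds_p' ds_S].
have ds_end : walk_end (tgt e) ds = src e by rewrite /walk_end ds_p'.
exists ds; split => //.
move: p'_uniq; rewrite lastI rcons_uniq -p'_last => /andP [src_p' u_p'].
rewrite /is_cycle /=; apply/and4P; split => //.
- exact: walk_cycle_path.
- rewrite (walk_uniq_edges w_ds) ?andbT; last by rewrite ds_p' lastI -p'_last rcons_uniq src_p'.
  by apply/mapP => [[d /(allP ds_S)]]; rewrite !inE => /andP [/negP ? _] ?; subst e.
- by rewrite (walk_tails w_ds) ds_p' /dtail /=.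
- by rewrite (walk_tails w_ds) ds_p'.
Qed.

Lemma bnd_sum_cut (z : chain) (A : {set V}) :
  \sum_(v in A) bnd z v = \sum_(f | tgt f \in A) z f - \sum_(f | src f \in A) z f.
Proof.
have sum_part (g : E -> V) : \sum_(v in A) \sum_(f | g f == v) z f = \sum_(f | g f \in A) z f.
  rewrite (partition_big g (mem A)) //=; apply: eq_bigr => v vA; apply: eq_bigl => f.
  by case: eqP => [->|_]; rewrite ?vA ?andbF.
under eq_bigr do rewrite ffunE.
by rewrite sumrB !sum_part.
Qed.

Lemma bnd_sum_edge_cut (z : chain) e (A : {set V}) :
  (forall f, f \in supp z -> f != e -> (tgt f \in A) = (src f \in A)) ->
  tgt e \in A -> src e \notin A -> \sum_(v in A) bnd z v = z e.
Proof.
move=> A_closed eA eA'; rewrite bnd_sum_cut (bigD1 e) //= -addrA.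
rewrite [X in _ - X](eq_bigl (fun f => (src f \in A) && (f != e))); last first.
  by move=> f; case: eqP => [->|_]; rewrite ?(negbTE eA') ?andbT.
rewrite [X in _ + X](_ : _ = 0) ?addr0 //; apply/eqP; rewrite subr_eq0; apply/eqP.
rewrite big_mkcond [RHS]big_mkcond; apply: eq_bigr => f _ /=.
case: (eqVneq f e) => [->|fe]; rewrite ?andbF // !andbT.
case: (eqVneq (z f) 0) => [->|zf]; first by do 2 case: ifP.
by rewrite A_closed ?inE.
Qed.

Lemma bridge_cut_value (z : chain) u w e :
  bnd z = vdelta w - vdelta u -> e \in supp z ->
  ~~ connect (adjS src tgt (supp z :\ e)) (tgt e) (src e) ->
  exists A : {set V}, [/\ tgt e \in A, src e \notin A & z e = (w \in A)%:R - (u \in A)%:R].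
Proof.
move=> bz ez e_bridge.
pose A := [set v | connect (adjS src tgt (supp z :\ e)) (tgt e) v].
have eA : tgt e \in A by rewrite inE connect0.
have eA' : src e \notin A by rewrite inE.
exists A; split => //; rewrite -(bnd_sum_edge_cut _ eA eA').
  rewrite bz; under eq_bigr do rewrite !ffunE.
  by rewrite sumrB !sum_natr_eq.
move=> f fz fe; have fS : f \in supp z :\ e by rewrite in_setD1 fe fz.
have f_st : adjS src tgt (supp z :\ e) (src f) (tgt f).
  by apply/existsP; exists f; rewrite fS !eqxx.
have f_ts : adjS src tgt (supp z :\ e) (tgt f) (src f).
  by apply/existsP; exists f; rewrite fS !eqxx orbT.
by rewrite !inE; apply/idP/idP => /connect_trans; apply; exact: connect1.
Qed.

Lemma bridge_dart (z : chain) u w : bnd z = vdelta w - vdelta u -> z != 0 ->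
  (forall e, e \in supp z -> ~~ connect (adjS src tgt (supp z :\ e)) (tgt e) (src e)) ->
  exists d, dtail d = u /\ z d.1 = dart_chain d d.1.
Proof.
move=> bz z0 bridges.
have cut f (fz : f \in supp z) := bridge_cut_value bz fz (bridges f fz).
case: (boolP [exists f, (f \in supp z) && ((src f == u) || (tgt f == u))]).
  case/existsP => f /andP [fz f_at_u]; have [A [fA fA' zf]] := cut f fz.
  rewrite inE zf in fz; case/orP: f_at_u => /eqP fu; rewrite -fu ?(negbTE fA') ?fA in fz.
  - exists (f, true); rewrite /= ffunE eqxx zf -fu (negbTE fA').
    by move: fz; case: (w \in A); rewrite /= ?mulr0n ?subr0 ?subrr ?eqxx.
  - exists (f, false); rewrite /= !ffunE eqxx zf -fu fA.
    by move: fz; case: (w \in A); rewrite /= ?mulr0n ?mulr1n ?subrr ?sub0r ?eqxx.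
rewrite negb_exists => /forallP no_edge_at_u.
have z_at_u f : (src f == u) || (tgt f == u) -> z f = 0.
  by move=> fu; apply/eqP; move: (no_edge_at_u f); rewrite inE fu andbT negbK.
have uw : u = w.
  apply/eqP; apply: contraT => uw; have /ffunP/(_ u) := bz.
  rewrite !ffunE !big1 => [|f /eqP fu|f /eqP fu]; rewrite ?z_at_u ?fu ?eqxx ?orbT //.
  by rewrite (negbTE uw) subrr sub0r => /eqP; rewrite eq_sym oppr_eq0 oner_eq0.
have [f fz] : exists f, f \in supp z.
  by apply/set0Pn; rewrite supp_eq0.
have [A [_ _ zf]] := cut f fz.
by move: fz; rewrite inE zf uw subrr eqxx.
Qed.

End Chains.

Section Cover.
Variables (V E : finType) (src tgt : E -> V) (m : nat) (v0 : V).
Local Notation chain := {ffun E -> 'Z_m}.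
Local Notation bnd := (@bnd V E src tgt m).
Local Notation vdelta := (vdelta m).
Local Notation dtail := (dtail src tgt).
Local Notation dhead := (dhead src tgt).
Local Notation C := (cover_vtx src tgt m v0).
Local Notation adj := (@cover_adj _ _ src tgt m v0).
Local Notation dart_chain := (@dart_chain E m).
Local Notation walk_chain := (@walk_chain E m).
Local Notation walk := (walk src tgt).
Local Notation walk_end := (walk_end src tgt).

Lemma cover_adj_sym : symmetric adj.
Proof. by move=> x y; apply/existsP/existsP => [] [e xy]; exists e; rewrite orbC. Qed.

Lemma cover_step (a : C) d : dtail d = (val a).1 ->
  exists b : C, val b = (dhead d, (val a).2 + dart_chain d) /\ adj a b.
Proof.
case: a => [[x c] /= cx] d_x.
have cx' : cover_pred src tgt v0 (dhead d, c + dart_chain d).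
  by move: cx; rewrite /cover_pred raddfD /= bnd_dart_chain -d_x => /eqP ->; rewrite addrC subrKA.
exists (exist (cover_pred src tgt v0) _ cx'); split => //; apply/existsP; exists d.1.
by rewrite /= -d_x; case: d {cx' d_x} => e [] /=; rewrite ?subrK !eqxx ?orbT.
Qed.

Lemma cover_lift_walk (a : C) ds : walk (val a).1 ds ->
  exists b : C, val b = (walk_end (val a).1 ds, (val a).2 + walk_chain ds) /\ connect adj a b.
Proof.
elim: ds a => [|d ds IH] a /=.
  by exists a; rewrite /walk_chain big_nil addr0 /walk_end /=; case: (val a).
case/andP => /eqP d_a w_ds; have [a1 [a1E a_a1]] := cover_step d_a.
have := IH a1; rewrite a1E /= => /(_ w_ds) [b [bE a1_b]]; exists b; split.
  by rewrite bE walk_chain_cons addrA.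
exact: connect_trans (connect1 a_a1) a1_b.
Qed.

Lemma cover_chain_inj (a b : C) : (val a).2 = (val b).2 -> a = b.
Proof.
case: a b => [[u c] ca] [[w c'] cb] /= cc'; subst c'; apply: val_inj => /=.
move: ca cb; rewrite /cover_pred /= => /eqP -> /eqP /(canRL (subrK _)); rewrite subrK.
move=> /ffunP /(_ u); rewrite !ffunE eqxx.
by case: eqP => [->|_] // /eqP; rewrite eq_sym oner_eq0.
Qed.

Definition cover_diff (a b : C) : chain := (val b).2 - (val a).2.

Lemma bnd_cover_diff (a b : C) :
  bnd (cover_diff a b) = vdelta (val b).1 - vdelta (val a).1.
Proof.
case: a b => [[u c] ca] [[w c'] cb]; move: ca cb; rewrite /cover_pred /cover_diff /=.
by rewrite raddfB /= => /eqP -> /eqP ->; rewrite opprB addrA subrK.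
Qed.

Lemma cover_diff_eq0 (a b : C) : cover_diff a b = 0 -> a = b.
Proof. by move/subr0_eq/esym; exact: cover_chain_inj. Qed.

Lemma cover_step_bridges (a b : C) : cover_diff a b != 0 ->
  (forall e, e \in supp (cover_diff a b) ->
     ~~ connect (adjS src tgt (supp (cover_diff a b) :\ e)) (tgt e) (src e)) ->
  exists2 a' : C, adj a a' & supp (cover_diff a' b) \proper supp (cover_diff a b).
Proof.
move=> z0 bridges; have [d [d_a zd]] := bridge_dart (bnd_cover_diff a b) z0 bridges.
have [a' [a'E a_a']] := cover_step d_a; exists a' => //.
have -> : cover_diff a' b = cover_diff a b - dart_chain d.
  by rewrite /cover_diff a'E opprD addrA.
by rewrite supp_subr_dart_chain // properD1 // inE zd dart_chain_neq0.
Qed.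

Lemma cover_lift_closed_walk x ds k (b : C) : walk x ds -> walk_end x ds = x ->
  (val b).1 = x ->
  exists b' : C, val b' = (x, (val b).2 + walk_chain ds *+ k) /\ connect adj b b'.
Proof.
move=> w_ds ds_x; elim: k b => [|k IH] b bx.
  by exists b; rewrite mulr0n addr0 -bx; case: (val b).
have [b1 [b1E b_b1]] := IH b bx.
have w_b1 : walk (val b1).1 ds by rewrite b1E.
have [b2 [b2E b1_b2]] := cover_lift_walk w_b1.
exists b2; split; last exact: connect_trans b_b1 b1_b2.
by rewrite b2E b1E /= ds_x mulrS (addrC (walk_chain ds)) addrA.
Qed.

Hypothesis X_connected : connected_graph src tgt.

Lemma connect_cover_shift (a a' : C) x ds k : walk x ds -> walk_end x ds = x ->
  val a' = ((val a).1, (val a).2 + walk_chain ds *+ k) -> connect adj a a'.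
Proof.
move=> w_ds ds_x a'E.
have [W [w_W W_x _]] := walk_of_connect (X_connected (val a).1 x).
have [a1 [a1E a_a1]] := cover_lift_walk w_W.
have a1_x : (val a1).1 = x by rewrite a1E.
have [a2 [a2E a1_a2]] := cover_lift_closed_walk k w_ds ds_x a1_x.
have w_a' : walk (val a').1 W by rewrite a'E.
have [a3 [a3E a'_a3]] := cover_lift_walk w_a'.
have a3a2 : a3 = a2.
  by apply: cover_chain_inj; rewrite a3E a2E a1E a'E /= -!addrA (addrC (_ *+ k)).
apply: connect_trans (connect_trans a_a1 a1_a2) _.
by rewrite -a3a2 (sym_connect_sym cover_adj_sym).
Qed.

(* Walk from [a] to the cycle, go around it [z e] times and walk back. *)
Lemma cover_step_nonbridge (a b : C) e : e \in supp (cover_diff a b) ->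
  connect (adjS src tgt (supp (cover_diff a b) :\ e)) (tgt e) (src e) ->
  exists2 a' : C, connect adj a a' & supp (cover_diff a' b) \proper supp (cover_diff a b).
Proof.
set S := supp _ => eS e_nonbridge.
have [ds [w_ds ds_end ds_S _]] := cycle_of_nonbridge eS e_nonbridge.
set g := walk_chain ((e, true) :: ds).
have g_e : g e = 1.
  rewrite /g walk_chain_cons ffunE walk_chain_off ?addr0 /= ?ffunE ?eqxx //.
  by apply/sub_all: ds_S => d; rewrite in_setD1 => /andP [].
have g_S f : f \notin S -> g f = 0.
  move=> fS; rewrite /g walk_chain_cons ffunE dart_chain_off ?walk_chain_off ?addr0 //=.
    by apply/sub_all: ds_S => d /setD1P [_ dS]; apply: contraNneq fS => <-.
  by apply: contraNneq fS => <-.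
have w_g : walk (src e) ((e, true) :: ds) by rewrite /= eqxx.
have g_end : walk_end (src e) ((e, true) :: ds) = src e by [].
set k := nat_of_ord (cover_diff a b e).
have a'P : cover_pred src tgt v0 ((val a).1, (val a).2 + g *+ k).
  move: (valP a); rewrite /cover_pred raddfD raddfMn /= (bnd_walk_chain m w_g) g_end.
  by rewrite subrr mul0rn addr0.
pose a' : C := exist (cover_pred src tgt v0) _ a'P.
exists a'; first by apply: (connect_cover_shift (k := k) w_g g_end).
apply: sub_proper_trans (properD1 eS); apply/subsetP => f.
have -> : cover_diff a' b = cover_diff a b - g *+ k by rewrite /cover_diff /= opprD addrA.
have diffE : (cover_diff a b - g *+ k) f = cover_diff a b f - g f *+ k.
  by rewrite !ffunE ffunMnE.
rewrite !inE diffE; case: (eqVneq f e) => [->|fe].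
  by rewrite g_e /k natr_Zp subrr eqxx.
by apply: contraNneq => zf0; rewrite zf0 g_S ?mul0rn ?subrr ?eqxx // inE zf0 eqxx.
Qed.

Lemma cover_connected (a b : C) : connect adj a b.
Proof.
elim: {a}_.+1 {-2}a (ltnSn #|supp (cover_diff a b)|) => // k IH a.
case: (eqVneq (cover_diff a b) 0) => [/cover_diff_eq0 ->|z0]; first by rewrite connect0.
rewrite ltnS => supp_k.
have [a' a_a' supp_a'] : exists2 a' : C, connect adj a a' &
    supp (cover_diff a' b) \proper supp (cover_diff a b).
  case: (boolP [exists e, (e \in supp (cover_diff a b)) &&
      connect (adjS src tgt (supp (cover_diff a b) :\ e)) (tgt e) (src e)]).
    by case/existsP => e /andP []; exact: cover_step_nonbridge.
  rewrite negb_exists => /forallP bridges.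
  have [e|a' /connect1] := cover_step_bridges z0; last by exists a'.
  by move: (bridges e); rewrite negb_and => /orP [/negPn|].
exact: connect_trans a_a' (IH _ (leq_trans (proper_card supp_a') supp_k)).
Qed.

End Cover.

Lemma find_iota_le (P : pred nat) M i : P i -> (find P (iota 0 M) <= i)%N.
Proof.
move=> Pi; case: (ltnP i M) => [iM|Mi].
  by rewrite leqNgt; apply/negP => /(before_find 0); rewrite nth_iota // Pi.
by rewrite (leq_trans _ Mi) // -[X in (_ <= X)%N](size_iota 0 M) find_size.
Qed.

Lemma find_iota_lt (P : pred nat) M : (find P (iota 0 M) < M)%N -> P (find P (iota 0 M)).
Proof.
move=> lt_M; have has_P : has P (iota 0 M) by rewrite has_find size_iota.
by have := nth_find 0 has_P; rewrite nth_iota.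
Qed.

Section GraphDistance.
Variables (T : finType) (adj : rel T).

Lemma gdist_le x y k : walk_len adj x y k -> (gdist adj x y <= k)%N.
Proof. exact: find_iota_le. Qed.

Lemma gdist_le_card x y : (gdist adj x y <= #|T|)%N.
Proof. by rewrite /gdist -[X in (_ <= X)%N](size_iota 0 #|T|) find_size. Qed.

Lemma walk_len_cons x x' y k : adj x x' -> walk_len adj x' y k -> walk_len adj x y k.+1.
Proof.
move=> xx' /existsP [p /andP [p_path p_last]]; apply/existsP.
by exists (cons_tuple x' p); rewrite /= xx' p_path.
Qed.

Lemma gdist_walk x y : connect adj x y -> walk_len adj x y (gdist adj x y).
Proof.
move/connectP => [p p_path ->]; case: (shortenP p_path) => p' p'_path p'_uniq _.
have p'_walk : walk_len adj x (last x p') (size p').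
  by apply/existsP; exists (in_tuple p'); rewrite /= p'_path eqxx.
apply: find_iota_lt; apply: leq_ltn_trans (find_iota_le _ p'_walk) _.
by rewrite cardE; apply: (uniq_leq_size p'_uniq) => z; rewrite mem_enum.
Qed.

End GraphDistance.

Section ShortCover.
Variables (V E : finType) (src tgt : E -> V) (m : nat) (v0 : V).
Local Notation C := (cover_vtx src tgt m v0).
Local Notation adj := (@cover_adj _ _ src tgt m v0).

Lemma gdist_cover_le_supp L (a b : C) : girth_ge src tgt L.+1 ->
  (#|supp (cover_diff a b)| <= L)%N -> (gdist adj a b <= #|supp (cover_diff a b)|)%N.
Proof.
move=> girth supp_L; suff [k k_supp /gdist_le] : exists2 k, (k <= #|supp (cover_diff a b)|)%N
  & walk_len adj a b k by move/leq_trans; apply.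
elim: {a}_.+1 {-2}a (ltnSn #|supp (cover_diff a b)|) supp_L => // n IH a.
rewrite ltnS => supp_n supp_L.
case: (eqVneq (cover_diff a b) 0) => [/cover_diff_eq0 ->|z0].
  by exists 0%N => //; apply/existsP; exists [tuple]; rewrite /= eqxx.
have [e|a' a_a' supp_a'] := cover_step_bridges z0.
  set S := supp _ => eS; apply/negP => /(cycle_of_nonbridge eS) [ds [_ _ ds_S cyc]].
  have := girth _ cyc; rewrite ltnNge => /negP; apply; apply: leq_trans supp_L.
  apply: size_le_card_edges; first by case/and4P: cyc.
  by rewrite /= eS; apply/sub_all: ds_S => d /setD1P [].
have lt_supp := proper_card supp_a'.
have [k k_supp walk_k] := IH a' (leq_trans lt_supp supp_n) (leq_trans (ltnW lt_supp) supp_L).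
by exists k.+1; [exact: leq_ltn_trans k_supp lt_supp | exact: walk_len_cons a_a' walk_k].
Qed.

End ShortCover.

Section WordDistance.
Variables (E : finType) (m : nat).
Local Notation chain := {ffun E -> 'Z_m}.

Lemma supp_sum_dart_chain (w : seq (E * bool)) :
  supp (\sum_(p <- w) dart_chain m p) \subset [set p.1 | p in w].
Proof.
apply/subsetP => e; rewrite inE; apply: contraR => e_w.
rewrite sum_ffunE big_seq big1 // => p pw; apply: dart_chain_off.
by apply: contraNneq e_w => <-; exact: imset_f.
Qed.

Lemma card_supp_le_word_dist (Is : {set E}) (a b : chain) :
  (#|supp (b - a)%R| <= word_dist Is a b)%N.
Proof.
rewrite /word_dist; set M := #|{ffun E -> 'Z_m}|.
case: (ltnP (find (word_len Is a b) (iota 0 M)) M) => [/find_iota_lt|M_le].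
  case/existsP => w /andP [_ /eqP <-]; rewrite -[X in (_ <= X)%N](size_tuple w).
  apply: leq_trans (subset_leq_card (supp_sum_dart_chain w)) _.
  exact: leq_trans (leq_imset_card _ _) (card_size w).
apply: leq_trans M_le; apply: leq_trans (max_card _) _.
by rewrite /M card_ffun card_ord ltnW // ltn_expl.
Qed.

End WordDistance.

Section TreeAverage.
Variables (R : realFieldType) (V E : finType) (src tgt : E -> V) (m : nat) (v0 : V) (N : nat).
Local Notation chain := {ffun E -> 'Z_m}.
Local Notation C := (cover_vtx src tgt m v0).
Local Notation adj := (@cover_adj _ _ src tgt m v0).
Local Notation tree := (spanning_treeb src tgt).
Hypothesis trees_avoiding : forall e : E, #|[set T : {set E} | tree T & e \notin T]| = N.

Lemma count_trees_avoiding e : (\sum_(T | tree T) (e \notin T))%N = N.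
Proof.
rewrite -(trees_avoiding e) -sum1_card big_mkcond [RHS]big_mkcond /=.
by apply: eq_bigr => T _; rewrite inE; case: (tree T); case: (e \notin T).
Qed.

Lemma cover_adj_dart (a b : C) : adj a b -> exists d, (val b).2 = (val a).2 + dart_chain m d.
Proof.
case/existsP => e /orP [] /andP [_ /eqP b_a]; first by exists (e, true).
by exists (e, false); rewrite b_a addrK.
Qed.

Lemma supp_cloud_diff T (a b : chain) : supp (cloud T b - cloud T a) = supp (b - a) :\: T.
Proof.
by apply/setP => e; rewrite !inE !ffunE; case: (e \in T); rewrite ?subrr ?eqxx.
Qed.

Lemma word_dist_cloud_dart T (a : chain) d :
  (word_dist (~: T) (cloud T a) (cloud T (a + dart_chain m d)%R) <= (d.1 \notin T))%N.
Proof.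
apply: find_iota_le; apply/existsP; case: (boolP (d.1 \in T)) => dT /=.
  exists [tuple]; rewrite /= big_nil eq_sym subr_eq0; apply/eqP/ffunP => f.
  rewrite !ffunE; case: ifP => // fT; rewrite dart_chain_off ?addr0 //.
  by apply: contraTneq dT => ->; rewrite fT.
exists [tuple d]; rewrite /= inE dT big_seq1 -/(dart_chain m d); apply/eqP/ffunP => f.
rewrite !ffunE; case: ifP => fT; last by rewrite addrC addKr.
by rewrite dart_chain_off ?subrr //; apply: contraNneq dT => ->.
Qed.

Lemma dQn_le1 (a b : C) : adj a b -> dQn R N a b <= 1.
Proof.
case/cover_adj_dart => d b_a; rewrite /dQn.
have sum_le : \sum_(T | tree T) (word_dist (~: T) (cloud T (val a).2) (cloud T (val b).2))%:R
    <= (N%:R : R).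
  rewrite -(count_trees_avoiding d.1) natr_sum; apply: ler_sum => T _.
  by rewrite ler_nat b_a word_dist_cloud_dart.
case: (eqVneq N 0%N) => [->|N0]; first by rewrite invr0 mul0r ler01.
rewrite -[X in _ <= X](mulVf (_ : N%:R != 0 :> R)) ?pnatr_eq0 //.
by apply: (ler_wpM2l _ sum_le); rewrite invr_ge0 ler0n.
Qed.

Lemma card_supp_le_dQn (a b : C) : N != 0%N -> #|supp (cover_diff a b)|%:R <= dQn R N a b.
Proof.
move=> N0; set S := supp (cover_diff a b).
have double_count : (#|S| * N = \sum_(T | tree T) #|S :\: T|)%N.
  have card_setD T : #|S :\: T| = (\sum_(e in S) (e \notin T))%N.
    rewrite -sum1_card big_mkcond [RHS]big_mkcond; apply: eq_bigr => e _.
    by rewrite !inE; case: (e \in T); case: (_ != 0).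
  under [RHS]eq_bigr => T _ do rewrite card_setD.
  rewrite exchange_big /=; under eq_bigr do rewrite count_trees_avoiding.
  by rewrite sum_nat_const.
rewrite /dQn -[X in X <= _](mulKf (_ : N%:R != 0 :> R)) ?pnatr_eq0 // -natrM mulnC double_count.
rewrite natr_sum ler_wpM2l ?invr_ge0 ?ler0n // ler_sum // => T _; rewrite ler_nat.
by rewrite -supp_cloud_diff card_supp_le_word_dist.
Qed.

End TreeAverage.

Section ComponentBounds.
Variables (R : realFieldType) (V E : finType) (src tgt : E -> V) (m : nat) (v0 : V) (N : nat).
Local Notation C := (cover_vtx src tgt m v0).
Local Notation adj := (@cover_adj _ _ src tgt m v0).
Hypothesis trees_avoiding :
  forall e : E, #|[set T : {set E} | spanning_treeb src tgt T & e \notin T]| = N.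
Hypothesis dQn_metric : is_metric (dQn R N : C -> C -> R).

Lemma dQn_le_gdist (X_connected : connected_graph src tgt) (a b : C) :
  dQn R N a b <= (gdist adj a b)%:R.
Proof.
case: dQn_metric => dQn0 [_ [_ dQn_tri]].
move: (gdist_walk (cover_connected X_connected a b)); move: (gdist adj a b) => k.
case/existsP => [[p /= /eqP <-]] /andP [p_path /eqP <-].
elim: p a p_path => [|a' p IH] a /=; first by rewrite dQn0.
case/andP => a_a' p_path; apply: le_trans (dQn_tri _ a' _) _.
by rewrite mulrS lerD ?dQn_le1 ?IH.
Qed.

Lemma card_supp_le_dQn_metric (a b : C) : #|supp (cover_diff a b)|%:R <= dQn R N a b.
Proof.
case: (eqVneq N 0%N) => [N0|]; last exact: card_supp_le_dQn.
case: dQn_metric => dQn0 [dQn_pos _]; case: (eqVneq a b) => [<-|ab].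
  rewrite dQn0 /cover_diff subrr.
  by rewrite (eqP (_ : supp 0 == set0)) ?cards0 // supp_eq0.
by have := dQn_pos _ _ (elimN eqP ab); rewrite /dQn N0 invr0 mul0r ltxx.
Qed.

End ComponentBounds.

Definition classicb (A : Prop) : bool := if excluded_middle_informative A then true else false.

Lemma classicbP (A : Prop) : reflect A (classicb A).
Proof. by rewrite /classicb; case: excluded_middle_informative => h; constructor. Qed.

Section MinimumAttainment.
Variables (R : realFieldType) (P : Type) (g : P -> R).

Definition attains_min (S : P -> Prop) := exists2 p, S p & forall q, S q -> g p <= g q.

Lemma attains_min_nat S : (forall p, S p -> exists k : nat, g p = k%:R) ->
  (exists p, S p) -> attains_min S.
Proof.
move=> S_nat [p Sp]; have [k gp] := S_nat p Sp.
elim/ltn_ind: k p Sp gp => k IH p Sp gp.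
case: (classic (exists2 q, S q & g q < g p)) => [[q Sq gq]|no_smaller].
  have [j gj] := S_nat q Sq; apply: (IH j _ q Sq gj).
  by rewrite -(ltr_nat R) -gj -gp.
exists p => // q Sq; rewrite leNgt; apply/negP => gq; apply: no_smaller; by exists q.
Qed.

Lemma attains_min_finite (F : finType) (f : F -> P) S :
  (forall p, S p -> exists u, p = f u) -> (exists p, S p) -> attains_min S.
Proof.
move=> S_f [p Sp]; have [u0 pu0] := S_f p Sp.
have Su0 : classicb (S (f u0)) by apply/classicbP; rewrite -pu0.
case: (@arg_minP _ _ _ u0 (fun u => classicb (S (f u))) (fun u => g (f u)) Su0).
move=> u /classicbP Su u_min.
by exists (f u) => // q /[dup] /S_f [v ->] Sv; apply: u_min; exact/classicbP.
Qed.

Lemma attains_min_split (S S1 S2 : P -> Prop) : (forall p, S p <-> S1 p \/ S2 p) ->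
  ((exists p, S1 p) -> attains_min S1) -> ((exists p, S2 p) -> attains_min S2) ->
  (exists p, S p) -> attains_min S.
Proof.
move=> S12 min1 min2 [p0 Sp0].
case: (classic (exists p, S1 p)) => [/min1 [p1 S1p1 p1_min]|no1];
  case: (classic (exists p, S2 p)) => [/min2 [p2 S2p2 p2_min]|no2].
- case: (lerP (g p1) (g p2)) => [p12|p21].
    by exists p1 => [|q /S12 [/p1_min|/p2_min /(le_trans p12)]] //; apply/S12; left.
  by exists p2 => [|q /S12 [/p1_min /(le_trans (ltW p21))|/p2_min]] //; apply/S12; right.
- exists p1 => [|q /S12 [/p1_min //|S2q]]; first by apply/S12; left.
  by case: no2; exists q.
- exists p2 => [|q /S12 [S1q|/p2_min //]]; first by apply/S12; right.
  by case: no1; exists q.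
- by case/S12: Sp0 => [S1p0|S2p0]; [case: no1 | case: no2]; exists p0.
Qed.

Lemma attains_min_below (S : P -> Prop) t :
  attains_min (fun p => S p /\ g p <= t) -> attains_min S.
Proof.
case=> p [Sp pt] p_min; exists p => // q Sq.
case: (lerP (g q) t) => [qt|tq]; first exact: p_min.
exact: le_trans pt (ltW tq).
Qed.

End MinimumAttainment.

Lemma lower_control (R : realFieldType) (P : Type) (f g : P -> R) :
  (forall S, (exists p, S p) -> attains_min g S) ->
  (forall M, exists t0, forall p, t0 <= f p -> M <= g p) ->
  exists rm : R -> R, [/\ nondecreasing_fun rm, tends_to_infty rm & forall p, rm (f p) <= g p].
Proof.
move=> min_g g_large.
have minimizer t : (exists p, t <= f p) -> {p | t <= f p /\ forall q, t <= f q -> g p <= g q}.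
  move=> ne; apply: constructive_indefinite_description.
  by have [p tp p_min] := min_g _ ne; exists p.
pose mt t := if excluded_middle_informative (exists p, t <= f p) is left ne
  then g (sval (minimizer t ne)) else t.
have mtP t : (~ exists p, t <= f p) /\ mt t = t \/
    exists p, [/\ t <= f p, mt t = g p & forall q, t <= f q -> g p <= g q].
  rewrite /mt; case: excluded_middle_informative => [ne|]; last by left.
  by right; case: (minimizer t ne) => p [tp p_min]; exists p.
exists (fun t => Num.min t (mt t)); split.
- move=> s t st; case: (mtP t) => [[empty ->]|[p [tp -> p_min]]].
    by rewrite minxx ge_min (le_trans st) ?lexx.
  case: (mtP s) => [[empty _]|[q [sq -> q_min]]].
    by case: empty; exists p; exact: le_trans tp.
  by rewrite le_min !ge_min st (q_min p (le_trans st tp)) !orbT.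
- move=> M; have [t0 t0_large] := g_large M; exists (Num.max M t0) => t.
  rewrite ge_max le_min => /andP [Mt t0t]; rewrite Mt /=.
  case: (mtP t) => [[_ ->] //|[p [tp -> _]]]; apply: t0_large; exact: le_trans tp.
- move=> p; rewrite ge_min; apply/orP; right.
  by case: (mtP (f p)) => [[empty _]|[q [_ -> q_min]]]; [case: empty; exists p | exact: q_min].
Qed.

Section NatCeiling.
Variable R : realFieldType.

Definition nat_bounded (t : R) := exists L : nat, t <= L%:R.

Definition ceil_nat (t : R) : nat :=
  if excluded_middle_informative (nat_bounded t) is left h then ex_minn h else 0.

Lemma ceil_natP t : nat_bounded t -> t <= (ceil_nat t)%:R.
Proof. by rewrite /ceil_nat; case: excluded_middle_informative => // h _; case: ex_minnP. Qed.

Lemma ceil_nat_min t L : t <= L%:R -> (ceil_nat t <= L)%N.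
Proof.
move=> tL; rewrite /ceil_nat; case: excluded_middle_informative => [h|[]]; last by exists L.
by case: ex_minnP => k _; apply.
Qed.

Lemma nat_upper_control (G : nat -> nat) : {homo G : a b / (a <= b)%N} ->
  exists rp : R -> R, [/\ nondecreasing_fun rp, forall t, t <= rp t &
    forall k : nat, (G k)%:R <= rp k%:R].
Proof.
move=> G_mono.
exists (fun t => t + if classicb (nat_bounded t) then (G (ceil_nat t))%:R else 0).
split.
- move=> s t st; case: (classicbP (nat_bounded t)) => [t_bd|t_unb].
    have s_bd : nat_bounded s by case: t_bd => L tL; exists L; exact: le_trans st tL.
    case: (classicbP (nat_bounded s)) => // _.
    by rewrite lerD // ler_nat G_mono // ceil_nat_min // (le_trans st) // ceil_natP.
  case: (classicbP (nat_bounded s)) => [s_bd|_]; last by rewrite !addr0.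
  (* [R] need not be archimedean: [t] exceeds every natural number, in particular
     [ceil_nat s + G (ceil_nat s)]. *)
  rewrite addr0 ltW // (@le_lt_trans _ _ (ceil_nat s + G (ceil_nat s))%:R) //.
    by rewrite natrD lerD // ceil_natP.
  by rewrite ltNge; apply/negP => tk; apply: t_unb; exists (ceil_nat s + G (ceil_nat s))%N.
- by move=> t; rewrite lerDl; case: classicb.
- move=> k; case: (classicbP (nat_bounded k%:R)) => [_|[]]; last by exists k.
  rewrite -natrD ler_nat (leq_trans _ (leq_addl _ _)) // G_mono // -(ler_nat R) ceil_natP //.
  by exists k.
Qed.

End NatCeiling.

Section CoarseDisjointUnion.
Variables (R : realFieldType) (C : nat -> finType).
Local Notation X := {n : nat & C n}.

Definition components_diverge (d : X -> X -> R) := forall M : R, exists N0 : nat,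
  forall x y : X, tag x <> tag y -> (N0 <= maxn (tag x) (tag y))%N -> M <= d x y.

Lemma diverge_small (d : X -> X -> R) N0 M x y :
  (forall x y : X, tag x <> tag y -> (N0 <= maxn (tag x) (tag y))%N -> M <= d x y) ->
  tag x <> tag y -> d x y < M -> (tag x < N0)%N /\ (tag y < N0)%N.
Proof.
move=> far xy dM; have : ~ (N0 <= maxn (tag x) (tag y))%N.
  by move=> /(far _ _ xy); rewrite leNgt dM.
by move/negP; rewrite leq_max negb_or -!ltnNge => /andP.
Qed.

(* The points of the components of index below [N0] form a finite type. *)
Definition low_embed N0 (u : {i : 'I_N0 & C i}) : X := Tagged C (tagged u).

Lemma low_embed_surj N0 (x : X) : (tag x < N0)%N ->
  exists u : {i : 'I_N0 & C i}, x = low_embed u.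
Proof.
by case: x => n a /= n_lt; exists (Tagged (fun i : 'I_N0 => C i) (a : C (Ordinal n_lt))).
Qed.

Definition low_max N0 (h : X -> X -> R) : R :=
  \big[Num.max/0]_(u : {i : 'I_N0 & C i} * {i : 'I_N0 & C i}) h (low_embed u.1) (low_embed u.2).

Lemma low_max_ge0 N0 h : 0 <= low_max N0 h.
Proof. exact: bigmax_ge_id. Qed.

Lemma le_low_max N0 h x y : (tag x < N0)%N -> (tag y < N0)%N -> h x y <= low_max N0 h.
Proof.
case/low_embed_surj => u ->; case/low_embed_surj => v ->.
exact: (le_bigmax _ _ (u, v)).
Qed.

Lemma low_max_le N0 h c : 0 <= c ->
  (forall x y, (tag x < N0)%N -> (tag y < N0)%N -> h x y <= c) -> low_max N0 h <= c.
Proof. by move=> c0 hc; apply: bigmax_le => // u _; apply: hc; exact: ltn_ord. Qed.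

Lemma cross_upper_control (d1 d2 : X -> X -> R) : components_diverge d1 ->
  exists Mc : R -> R, [/\ nondecreasing_fun Mc, forall t, 0 <= Mc t &
    forall x y, tag x <> tag y -> d2 x y <= Mc (d1 x y)].
Proof.
move=> div.
have [N0 N0P] : exists N0 : R -> nat, forall M x y,
    tag x <> tag y -> (N0 M <= maxn (tag x) (tag y))%N -> M <= d1 x y.
  exists (fun M => sval (constructive_indefinite_description _ (div M))) => M.
  exact: svalP (constructive_indefinite_description _ (div M)).
pose h t x y := if (tag x != tag y) && (d1 x y <= t) then d2 x y else 0.
have small t x y : tag x != tag y -> d1 x y <= t ->
    (tag x < N0 (t + 1)%R)%N /\ (tag y < N0 (t + 1)%R)%N.
  move=> /eqP xy d1t; apply: (diverge_small (N0P (t + 1)) xy).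
  by apply: le_lt_trans d1t _; rewrite ltrDl ltr01.
exists (fun t => low_max (N0 (t + 1)) (h t)); split.
- move=> s t st; apply: low_max_le => [|x y _ _]; first exact: low_max_ge0.
  rewrite /h; case: ifP => [/andP [xy d1s]|_]; last exact: low_max_ge0.
  have d1t := le_trans d1s st; have [xs ys] := small t x y xy d1t.
  by apply: le_trans (le_low_max (h t) xs ys); rewrite /h xy d1t.
- by move=> t; exact: low_max_ge0.
- move=> x y /eqP xy; have [xs ys] := small _ x y xy (lexx _).
  by apply: le_trans (le_low_max _ xs ys); rewrite /h xy lexx.
Qed.

Lemma cross_lower_bound (d1 g : X -> X -> R) : components_diverge g ->
  forall M, exists t0, forall x y, tag x <> tag y -> t0 <= d1 x y -> M <= g x y.
Proof.
move=> div M; have [N0 N0P] := div M; exists (low_max N0 d1 + 1) => x y xy t0d.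
rewrite leNgt; apply/negP => gM; have [xs ys] := diverge_small N0P xy gM.
by have := le_trans t0d (le_low_max d1 xs ys); rewrite gerDl ler10.
Qed.

Lemma attains_min_components (g : X -> X -> R) :
  (forall n (a b : C n), exists k : nat, g (Tagged C a) (Tagged C b) = k%:R) ->
  components_diverge g ->
  forall S : X * X -> Prop, (exists p, S p) -> attains_min (fun p => g p.1 p.2) S.
Proof.
move=> g_nat div S [p0 Sp0]; set t := g p0.1 p0.2; have [N0 N0P] := div (t + 1).
apply: (attains_min_below (t := t)).
apply: (@attains_min_split _ _ _ _ (fun p => (S p /\ g p.1 p.2 <= t) /\ tag p.1 = tag p.2)
                                   (fun p => (S p /\ g p.1 p.2 <= t) /\ tag p.1 <> tag p.2)).
- by move=> p; case: (classic (tag p.1 = tag p.2)); tauto.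
- apply: attains_min_nat => -[[n a] [k b]] [_ /= nk]; subst k; exact: g_nat.
- apply: (@attains_min_finite _ _ _
    ({i : 'I_N0 & C i} * {i : 'I_N0 & C i})%type (fun u => (low_embed u.1, low_embed u.2))).
  move=> [x y] [[_ gt] /= xy].
  have t_lt : t < t + 1 by rewrite ltrDl ltr01.
  have [/low_embed_surj [u ->] /low_embed_surj [v ->]] :=
    diverge_small N0P xy (le_lt_trans gt t_lt).
  by exists (u, v).
- by exists p0.
Qed.

Lemma large_of_bounded (f : forall n, C n -> C n -> R) (h : forall n, C n -> C n -> nat) :
  (forall n a b, exists k : nat, f n a b = k%:R) ->
  (forall L, exists B : nat, forall n a b, (h n a b <= L)%N -> f n a b <= B%:R) ->
  forall M : R, exists t0, forall n a b, t0 <= f n a b -> M <= (h n a b)%:R.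
Proof.
move=> f_nat f_bd M; case: (classic (nat_bounded M)) => [[L ML]|M_unb].
  have [B B_bd] := f_bd L; exists (B.+1)%:R => n a b Bf.
  apply: le_trans ML _; rewrite ler_nat leqNgt; apply/negP => /ltnW /B_bd fB.
  by have := le_trans Bf fB; rewrite ler_nat ltnn.
exists M => n a b Mf; have [k fk] := f_nat n a b.
by case: M_unb; exists k; rewrite -fk.
Qed.

Lemma upper_control_of_bounded (f q : forall n, C n -> C n -> R) (h : forall n, C n -> C n -> nat) :
  (forall L, exists B : nat, forall n a b, (h n a b <= L)%N -> f n a b <= B%:R) ->
  (forall n a b, (h n a b)%:R <= q n a b) ->
  exists rp : R -> R, [/\ nondecreasing_fun rp, forall t, t <= rp t &
    forall n a b, f n a b <= rp (q n a b)].
Proof.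
move=> f_bd hq.
have [B B_bd] : exists B : nat -> nat, forall L n a b, (h n a b <= L)%N -> f n a b <= (B L)%:R.
  exists (fun L => sval (constructive_indefinite_description _ (f_bd L))) => L.
  exact: svalP (constructive_indefinite_description _ (f_bd L)).
pose G L := (\sum_(0 <= j < L.+1) B j)%N.
have G_mono : {homo G : j k / (j <= k)%N}.
  by move=> j k jk; rewrite /G (@big_cat_nat _ _ _ j.+1 0 k.+1) //= leq_addr.
have [rp [rp_mono rp_ge rp_G]] := nat_upper_control R G_mono.
exists rp; split => // n a b; apply: le_trans (B_bd _ _ _ _ (leqnn _)) _.
apply: le_trans (rp_mono _ _ (hq n a b)); apply: le_trans (rp_G _).
by rewrite ler_nat /G big_nat_recr //= leq_addl.
Qed.

Lemma id_coarse_embedding (d1 d2 g : X -> X -> R) (rp : R -> R) :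
  (forall x y, 0 <= d1 x y) -> components_diverge d1 -> components_diverge g ->
  (forall x y, g x y <= d2 x y) ->
  (forall n (a b : C n), exists k : nat, g (Tagged C a) (Tagged C b) = k%:R) ->
  (forall M, exists t0, forall n (a b : C n),
     t0 <= d1 (Tagged C a) (Tagged C b) -> M <= g (Tagged C a) (Tagged C b)) ->
  nondecreasing_fun rp -> (forall t, t <= rp t) ->
  (forall n (a b : C n), d2 (Tagged C a) (Tagged C b) <= rp (d1 (Tagged C a) (Tagged C b))) ->
  coarse_embedding d1 d2 id.
Proof.
move=> d1_ge0 div1 div_g g_d2 g_nat g_large rp_mono rp_ge d2_rp.
have [rm [rm_mono rm_infty rm_g]] : exists rm : R -> R,
    [/\ nondecreasing_fun rm, tends_to_infty rm & forall p : X * X, rm (d1 p.1 p.2) <= g p.1 p.2].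
  apply: lower_control; first exact: attains_min_components.
  move=> M; have [t1 t1P] := g_large M; have [t2 t2P] := cross_lower_bound d1 div_g M.
  exists (Num.max t1 t2) => -[[n a] [k b]]; rewrite ge_max => /andP [t1d t2d] /=.
  by case: (eqVneq n k) => [nk|/eqP nk]; [subst k; exact: t1P | exact: t2P].
have [Mc [Mc_mono Mc_ge0 d2_Mc]] := cross_upper_control d2 div1.
exists rm, (fun t => rp t + Mc t); split; [done | split; [|split; [done | split]]].
- by move=> s t st; rewrite lerD ?rp_mono ?Mc_mono.
- by move=> M; exists M => t Mt; apply: le_trans Mt (le_trans (rp_ge t) _); rewrite lerDl.
- move=> [n a] [k b] /=; split; first exact: le_trans (rm_g (_, _)) (g_d2 _ _).
  case: (eqVneq n k) => [nk|/eqP nk]; first by subst k; rewrite (le_trans (d2_rp _ _ _)) // lerDl.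
  apply: le_trans (d2_Mc (Tagged C a) (Tagged C b) nk) _.
  by rewrite lerDr (le_trans (d1_ge0 _ _) (rp_ge _)).
Qed.

Lemma coarse_disjoint_union_diverge (dn : forall n, C n -> C n -> R) d :
  coarse_disjoint_union dn d -> components_diverge d.
Proof.
case=> _ [_ [_ div]] M; have [N0 N0P] := div M.
by exists N0 => -[n a] [k b] /= nk mx; exact: N0P n k nk mx a b.
Qed.

Lemma metric_ge0 (T : Type) (d : T -> T -> R) : is_metric d -> forall x y, 0 <= d x y.
Proof.
case=> d0 [_ [dsym dtri]] x y; have := dtri x y x.
by rewrite d0 (dsym y x) -mulr2n pmulrn_lge0.
Qed.

Lemma is_metric_component (dn : forall n, C n -> C n -> R) d n :
  coarse_disjoint_union dn d -> is_metric (dn n).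
Proof.
case=> [[d0 [dpos [dsym dtri]]] [d_dn _]]; split; [|split; [|split]] => [a|a b ab|a b|a b c];
  rewrite -!d_dn //.
apply: dpos => /(congr1 (tagged_as (Tagged C a))); rewrite !tagged_asE; exact: ab.
Qed.

Theorem coarse_equivalence_of_component_bounds (dn qn : forall n, C n -> C n -> R)
    (h : forall n, C n -> C n -> nat) (d dQ : X -> X -> R) :
  coarse_disjoint_union dn d -> coarse_disjoint_union qn dQ ->
  (forall n a b, qn n a b <= dn n a b) ->
  (forall n a b, (h n a b)%:R <= qn n a b) ->
  (forall L, exists B : nat, forall n a b, (h n a b <= L)%N -> dn n a b <= B%:R) ->
  (forall n a b, exists k : nat, dn n a b = k%:R) ->
  coarse_embedding d dQ id /\ coarse_embedding dQ d id.
Proof.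
move=> cd cdQ q_dn h_q dn_bd dn_nat.
have [_ [d_dn _]] := cd; have [_ [dQ_qn _]] := cdQ.
have [div div_Q] := (coarse_disjoint_union_diverge cd, coarse_disjoint_union_diverge cdQ).
split.
  (* Within a component [dQ] is bounded below by the integer-valued [h]; the lower control
     function is built from this hybrid, whose infima are attained. *)
  pose g x y := if tag x == tag y then (h (tag x) (tagged x) (tagged_as x y))%:R else dQ x y.
  have gE n (a b : C n) : g (Tagged C a) (Tagged C b) = (h n a b)%:R.
    by rewrite /g /= eqxx tagged_asE.
  apply: (@id_coarse_embedding _ _ g id) => //.
  - exact: metric_ge0 (proj1 cd).
  - move=> M; have [N0 N0P] := div_Q M; exists N0 => x y xy.
    by rewrite /g (introF eqP xy); exact: N0P.
  - move=> [n a] [k b]; rewrite /g /=; case: eqP => //= nk; subst k.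
    by rewrite tagged_asE dQ_qn.
  - by move=> n a b; rewrite gE; eexists.
  - move=> M; have [t0 t0P] := large_of_bounded dn_nat dn_bd M.
    by exists t0 => n a b; rewrite d_dn gE; exact: t0P.
  - by move=> n a b; rewrite d_dn dQ_qn.
have [rp [rp_mono rp_ge dn_rp]] := upper_control_of_bounded dn_bd h_q.
apply: (@id_coarse_embedding _ _ d rp) => //.
- exact: metric_ge0 (proj1 cdQ).
- by move=> n a b; rewrite d_dn.
- by move=> M; exists M => n a b; rewrite dQ_qn d_dn => /le_trans; apply.
- by move=> n a b; rewrite d_dn dQ_qn.
Qed.

End CoarseDisjointUnion.

Lemma gdist_cover_bounded (m : nat) (V E : nat -> finType) (src tgt : forall n, E n -> V n)
    (v0 : forall n, V n) :
  (forall L, exists N0, forall n, (N0 <= n)%N -> girth_ge (src n) (tgt n) L) ->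
  forall L, exists B : nat, forall n (a b : cover_vtx (src n) (tgt n) m (v0 n)),
    (#|supp (cover_diff a b)| <= L)%N ->
    (gdist (@cover_adj _ _ (src n) (tgt n) m (v0 n)) a b <= B)%N.
Proof.
move=> girth L; have [N0 N0P] := girth L.+1.
exists (maxn L (\max_(i < N0) #|{: cover_vtx (src i) (tgt i) m (v0 i)}|)) => n a b supp_L.
case: (ltnP n N0) => [n_lt|n_ge].
  apply: leq_trans (gdist_le_card _ _ _) (leq_trans _ (leq_maxr _ _)).
  exact: (leq_bigmax (Ordinal n_lt)).
exact: leq_trans (gdist_cover_le_supp (N0P n n_ge) supp_L) (leq_trans supp_L (leq_maxl _ _)).
Qed.

Theorem mainTheorem6 (R : realFieldType) (m : nat)
    (V E : nat -> finType) (src tgt : forall n, E n -> V n) (v0 : forall n, V n)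
    (N : nat -> nat)
    (d dQ : {n : nat & cover_vtx (src n) (tgt n) m (v0 n)} ->
            {n : nat & cover_vtx (src n) (tgt n) m (v0 n)} -> R) :
  (3 <= m)%N ->
  (forall n, connected_graph (src n) (tgt n)) ->
  (forall n, two_connected (src n) (tgt n)) ->
  (forall n (e : E n),
      #|[set T : {set E n} | spanning_treeb (src n) (tgt n) T & e \notin T]| = N n) ->
  (forall L, exists N0, forall n, (N0 <= n)%N -> girth_ge (src n) (tgt n) L) ->
  coarse_disjoint_union
    (fun n (a b : cover_vtx (src n) (tgt n) m (v0 n)) =>
       (gdist (@cover_adj _ _ (src n) (tgt n) m (v0 n)) a b)%:R) d ->
  coarse_disjoint_union
    (fun n (a b : cover_vtx (src n) (tgt n) m (v0 n)) =>
       dQn R (N n) a b) dQ ->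
  coarse_embedding d dQ id /\ coarse_embedding dQ d id.
Proof.
move=> _ X_connected _ trees_avoiding girth cd cdQ.
have dQn_metric n := is_metric_component n cdQ.
apply: (coarse_equivalence_of_component_bounds (h := fun n a b => #|supp (cover_diff a b)|) cd cdQ).
- by move=> n a b; apply: (dQn_le_gdist (trees_avoiding n) (dQn_metric n) (X_connected n)).
- by move=> n a b; apply: (card_supp_le_dQn_metric (trees_avoiding n) (dQn_metric n)).
- move=> L; have [B B_bd] := gdist_cover_bounded m v0 girth L.
  by exists B => n a b /B_bd; rewrite ler_nat.
- by move=> n a b; eexists.
Qed.
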